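(* Let $X$ be a compact metric space and $f: X \rightarrow X$ a continuous surjective map. Suppose there exist an infinite countable set $A=\{a_1,a_2,\dots\}\subset X$ and, for each $i\ge1$, a negative orbit $(x^i_{-n})_{n\ge 0}$ of $a_i$ (i.e. $x^i_0=a_i$ and $f(x^i_{-n-1})=x^i_{-n}$ for all $n\ge0$) such that: (i) the sets $L=\bigcup_{i\ge1}\big(\alpha((x^i_{-n})_{n\ge0},f)\cup\omega(a_i,f)\big)$ and $M=\bigcup_{i\ge1}\{x^i_{-n}: n\ge0\}$ are disjoint; (ii) for every pair $i\ne j$, $Orb((x^i_{-n})_{n\ge0},f)\cap Orb((x^j_{-n})_{n\ge0},f)=\emptyset$. Then $h(2^f)=\infty$.
   Context: $\alpha((x^i_{-n})_{n\ge0},f)$ is the set of accumulation points of the sequence $(x^i_{-n})$ as $n\to\infty$; $\omega(a_i,f)$ is the omega-limit set of $a_i$; $Orb((x^i_{-n})_{n\ge0},f)=\{x^i_{-n}:n\ge0\}\cup\{f^k(a_i):k\ge0\}$ is the full orbit through the given negative orbit. $2^X$ is the hyperspace of nonempty closed subsets with the Hausdorff metric, $2^f(B)=f(B)$, and $h$ is topological entropy. *)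

From HB Require Import structures.
From mathcomp Require Import all_boot all_order all_algebra.
From mathcomp Require Import all_classical all_reals all_analysis.
Set Implicit Arguments. Unset Strict Implicit. Unset Printing Implicit Defensive.
Import Order.TTheory GRing.Theory Num.Theory.
Import numFieldNormedType.Exports.
Local Open Scope classical_set_scope.
Local Open Scope ring_scope.

Section Defs.
Context {R : realType}.

Definition hyperspace (X : metricType R) : set (set X) :=
  [set B | B !=set0 /\ closed B].

Definition dist_pt_set (X : metricType R) (x : X) (B : set X) : R :=
  inf [set mdist x b | b in B].

Definition hausdorff_dist (X : metricType R) (A B : set X) : R :=
  Num.max (sup [set dist_pt_set a B | a in A])
          (sup [set dist_pt_set b A | b in B]).

Definition hyper_map (X : Type) (f : X -> X) (B : set X) : set X := f @` B.

Definition separated_family (T : Type) (S : set T) (D : T -> T -> R)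
    (g : T -> T) (n : nat) (eps : R) (m : nat) (e : 'I_m -> T) : Prop :=
  (forall i, S (e i)) /\
  (forall i j, i != j ->
     exists k : nat, (k < n)%N /\ eps < D (iter k g (e i)) (iter k g (e j))).

Definition sep_number (T : Type) (S : set T) (D : T -> T -> R)
    (g : T -> T) (n : nat) (eps : R) : \bar R :=
  ereal_sup [set (m%:R)%:E | m in
     [set m : nat | exists e : 'I_m -> T, separated_family S D g n eps e]].

Definition sep_rate (T : Type) (S : set T) (D : T -> T -> R)
    (g : T -> T) (eps : R) (n : nat) : \bar R :=
  match sep_number S D g n.+1 eps with
  | r%:E => (ln r / n.+1%:R)%:E
  | +oo%E => +oo%E
  | -oo%E => -oo%E
  end.

Definition top_entropy (T : Type) (S : set T) (D : T -> T -> R)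
    (g : T -> T) : \bar R :=
  ereal_sup [set limn_esup (sep_rate S D g eps) | eps in [set eps : R | 0 < eps]].

Definition hyper_entropy (X : metricType R) (f : X -> X) : \bar R :=
  top_entropy (@hyperspace X) (@hausdorff_dist X) (hyper_map f).

Definition acc_points (X : metricType R) (u : nat -> X) : set X :=
  cluster (u @ \oo).

Definition alpha_set (X : metricType R) (xneg : nat -> X) : set X :=
  acc_points xneg.

Definition omega_set (X : metricType R) (f : X -> X) (a : X) : set X :=
  acc_points (fun k => iter k f a).

Definition full_orbit (X : metricType R) (f : X -> X) (xneg : nat -> X) : set X :=
  range xneg `|` range (fun k => iter k f (xneg 0%N)).

End Defs.

From HB Require Import structures.
From mathcomp Require Import all_boot all_order all_algebra.
From mathcomp Require Import all_classical all_reals all_analysis.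
Import Order.TTheory GRing.Theory Num.Theory.
Import numFieldNormedType.Exports.
Local Open Scope classical_set_scope.
Local Open Scope ring_scope.

(* For a 0/1 pattern s on {0..N-1} x {0..n} let B_s be the finite set of the
   points x^i_{-k} with s(i,k) = 1, together with one fixed extra point.  If s
   and s' differ at (i,k) with s(i,k) = 1, then f^k(B_s) contains a_i while
   f^k(B_s') stays at distance at least d from a_i.  Here d > 0 depends only
   on N: a_i lies in M, hence is neither an alpha- nor an omega-limit point of
   the first N + 1 orbits, and by disjointness and aperiodicity an orbit hits
   a_i only as f^k(x^i_{-k}).  So the 2^(N(n+1)) sets B_s are
   (n+1, d/2)-separated for 2^f and h(2^f) >= N log 2 for every N. *)

Section metric_space.
Context {R : realType} {X : metricType R}.

Lemma not_cluster_mdist_ge (u : nat -> X) (p : X) :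
  ~ cluster (u @ \oo) p ->
  \forall d \near 0^'+, forall y, range u y -> y != p -> d <= mdist p y.
Proof.
rewrite clusterE => /existsNP[A /not_implyP[[N _ uA] /existsNP[B]]].
move=> /not_implyP[/nbhs_ballP[r r0 rB] /set0P/negP/negbNE/eqP AB0].
have far n : (N <= n)%N -> r <= mdist p (u n).
  move=> Nn; rewrite leNgt; apply/negP => unr.
  suff : (A `&` B) (u n) by rewrite AB0.
  split; first exact: uA.
  by apply: rB; rewrite -metricType_numDomainType.ball_mdistE.
have early_terms : \forall d \near 0^'+, forall n : 'I_N,
    u n != p -> d <= mdist p (u n).
  apply: filter_forall => n; have [->|unp] := eqVneq (u n) p.
    exact: nearW.
  have pun : 0 < mdist p (u n) by rewrite mdist_gt0 eq_sym.
  by apply: filterS (nbhs_right_le pun) => d.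
apply: filterS (filterI early_terms (nbhs_right_le r0)) => d [dN dr] _ [n _ <-].
have [nN|Nn] := ltnP n N; first exact: (dN (Ordinal nN)).
by move=> _; apply: le_trans dr (far n Nn).
Qed.

End metric_space.

Section omega_limit.
Context {R : realType} {X : metricType R} (f : X -> X).

Lemma periodic_omega_set (a : X) p : (0 < p)%N -> iter p f a = a ->
  omega_set f a a.
Proof.
move=> p0 ap A B [N _ NA] aB; exists a; split; last exact: nbhs_singleton.
have iter_mul q : iter (q * p) f a = a.
  by elim: q => [|q IH] //; rewrite mulSn iterD IH ap.
by rewrite -(iter_mul N); apply: NA; rewrite /= leq_pmulr.
Qed.

End omega_limit.

Section negative_orbit.
Context {R : realType} {X : metricType R} {f : X -> X} {xn : nat -> X}.
Hypothesis xnS : forall n, f (xn n.+1) = xn n.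

Lemma iter_negorbit_le j m : (j <= m)%N -> iter j f (xn m) = xn (m - j).
Proof.
elim: j => [|j IH] jm; first by rewrite subn0.
by rewrite iterS (IH (ltnW jm)) -subnSK // xnS.
Qed.

Lemma iter_negorbit_ge j m : (m <= j)%N ->
  iter j f (xn m) = iter (j - m) f (xn 0).
Proof. by move=> mj; rewrite -{1}(subnK mj) iterD iter_negorbit_le ?subnn. Qed.

Lemma full_orbit_iter j m : full_orbit f xn (iter j f (xn m)).
Proof.
have [jm|mj] := leqP j m.
  by left; exists (m - j)%N => //; apply/esym/iter_negorbit_le.
by right; exists (j - m)%N => //; apply/esym/iter_negorbit_ge/ltnW.
Qed.

Lemma iter_negorbit_eq0 j m : ~ omega_set f (xn 0) (xn 0) ->
  iter j f (xn m) = xn 0 -> m = j.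
Proof.
move=> aperiodic e; apply/eqP; rewrite eqn_leq.
apply/andP; split; rewrite leqNgt; apply/negP => lt; apply: aperiodic.
  apply: (periodic_omega_set f (xn 0) (m - j)); first by rewrite subn_gt0.
  have xm : xn (m - j) = xn 0 by rewrite -e; apply/esym/iter_negorbit_le/ltnW.
  by rewrite -{1}xm iter_negorbit_le // subnn.
apply: (periodic_omega_set f (xn 0) (j - m)); first by rewrite subn_gt0.
by rewrite -{2}e; apply/esym/iter_negorbit_ge/ltnW.
Qed.

Lemma full_orbit_mdist_ge (p : X) :
  ~ alpha_set xn p -> ~ omega_set f (xn 0) p ->
  \forall d \near 0^'+, forall y, full_orbit f xn y -> y != p ->
    d <= mdist p y.
Proof.
move=> /not_cluster_mdist_ge back /not_cluster_mdist_ge forth.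
by apply: filterS (filterI back forth) => d [bd fd] y [/bd|/fd].
Qed.

End negative_orbit.

Section hyperspace.
Context {R : realType} {X : metricType R}.

Lemma iter_hyper_map (f : X -> X) k (B : set X) :
  iter k (hyper_map f) B = iter k f @` B.
Proof.
elim: k => [|k IH] /=; first by rewrite image_id.
by rewrite IH /hyper_map image_comp.
Qed.

Lemma finite_set_hyperspace (B : set X) :
  B !=set0 -> finite_set B -> hyperspace B.
Proof.
move=> B0 fB; split => //.
exact: (proj1 (@accessible_finite_set_closed X))
  (hausdorff_accessible (@metric_hausdorff R X)) _ fB.
Qed.

Lemma hausdorff_distC (A B : set X) : hausdorff_dist A B = hausdorff_dist B A.
Proof. by rewrite /hausdorff_dist maxC. Qed.

Lemma hausdorff_dist_ge (A B : set X) (p : X) (d : R) :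
  finite_set A -> A p -> B !=set0 -> (forall b, B b -> d <= mdist p b) ->
  d <= hausdorff_dist A B.
Proof.
move=> fA Ap [b0 Bb0] dB; rewrite /hausdorff_dist le_max; apply/orP; left.
have dpB : d <= dist_pt_set p B.
  apply: lb_le_inf; first by exists (mdist p b0), b0.
  by move=> _ [b Bb <-]; exact: dB.
apply: le_trans dpB _; apply: ub_le_sup; last by exists p.
exact: (compact_has_sup (image_nonempty _ (ex_intro _ p Ap))
  (finite_compact (finite_image (fun q => dist_pt_set q B) fA))).2.
Qed.

End hyperspace.

Section entropy_lower_bound.
Context {R : realType} {T : Type} (S : set T) (D : T -> T -> R) (g : T -> T).

Lemma separated_family_enum (I : finType) (e : I -> T) n eps :
  (forall i, S (e i)) ->
  (forall i j, i != j ->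
    exists k, (k < n)%N /\ eps < D (iter k g (e i)) (iter k g (e j))) ->
  separated_family S D g n eps (fun k : 'I_#|I| => e (enum_val k)).
Proof.
move=> Se sep; split=> [k|k l kl]; first exact: Se.
by apply: sep; apply: contra kl => /eqP/enum_val_inj ->.
Qed.

Lemma top_entropy_ge_ln (c : nat) (eps : R) : 0 < eps -> (0 < c)%N ->
  (forall n, exists2 m, (c ^ n.+1 <= m)%N &
     exists e : 'I_m -> T, separated_family S D g n.+1 eps e) ->
  ((ln c%:R)%:E <= top_entropy S D g)%E.
Proof.
move=> eps0 c0 sep; apply: le_trans (ereal_sup_ubound _); last by exists eps.
rewrite limn_esup_lim; apply: lime_ge; first exact: is_cvg_esups.
apply: nearW => n; apply: le_trans (ereal_sup_ubound _); last by exists n => /=.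
have [m cm [e sep_e]] := sep n.
have m_le : ((m%:R)%:E <= sep_number S D g n.+1 eps)%E.
  by apply: ereal_sup_ubound; exists m => //; exists e.
have m0 : (0 < m%:R :> R) by rewrite ltr0n (leq_trans _ cm) ?expn_gt0 ?c0.
rewrite /sep_rate.
case: sep_number m_le => [r||] //= m_le; last by rewrite leey.
rewrite lee_fin ler_pdivlMr ?ltr0n // mulr_natr -lnXn ?ltr0n //.
rewrite lee_fin in m_le; have r0 : 0 < r := lt_le_trans m0 m_le.
rewrite ler_ln ?posrE ?exprn_gt0 ?ltr0n //.
by apply: le_trans m_le; rewrite -natrX ler_nat.
Qed.

End entropy_lower_bound.

Section orbit_family.
Context {R : realType} {X : metricType R} {f : X -> X} {a : nat -> X}
  {x : nat -> nat -> X}.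
Hypothesis x0 : forall i, x i 0%N = a i.
Hypothesis xS : forall i n, f (x i n.+1) = x i n.
Hypothesis limit_sets_disjoint :
  (\bigcup_i (alpha_set (x i) `|` omega_set f (a i))) `&`
    (\bigcup_i range (x i)) = set0.
Hypothesis orbits_disjoint :
  forall i j, i <> j -> full_orbit f (x i) `&` full_orbit f (x j) = set0.

Lemma a_not_limit i j : ~ alpha_set (x j) (a i) /\ ~ omega_set f (a j) (a i).
Proof.
suff : ~ (alpha_set (x j) `|` omega_set f (a j)) (a i) by move/not_orP.
move=> ai_lim; suff : set0 (a i) by [].
by rewrite -limit_sets_disjoint; split; [exists j | exists i => //; exists 0%N].
Qed.

Lemma iter_x_eq_a i j m k : iter k f (x j m) = a i -> j = i /\ m = k.
Proof.
move=> e; have ji : j = i.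
  apply: contrapT => /orbits_disjoint ji; suff : set0 (a i) by [].
  rewrite -ji; split; first by rewrite -e; exact: full_orbit_iter.
  by left; exists 0%N.
split=> //; subst j; apply: (iter_negorbit_eq0 (xS i)); rewrite x0 //.
by case: (a_not_limit i i).
Qed.

Definition orbit_gap (M : nat) (d : R) :=
  forall i j y, (i <= M)%N -> (j <= M)%N ->
    full_orbit f (x j) y -> y != a i -> d <= mdist (a i) y.

Lemma near_orbit_gap M : \forall d \near 0^'+, orbit_gap M d.
Proof.
have : \forall d \near 0^'+, forall (i j : 'I_M.+1) y,
    full_orbit f (x j) y -> y != a i -> d <= mdist (a i) y.
  apply: filter_forall => i; apply: filter_forall => j.
  have [not_alpha not_omega] := a_not_limit i j.
  by apply: (full_orbit_mdist_ge _ not_alpha); rewrite x0.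
apply: filterS => d gap i j y iM jM.
exact: (gap (Ordinal (iM : i < M.+1)%N) (Ordinal (jM : j < M.+1)%N)).
Qed.

Section pattern_sets.
Variables N n : nat.
Implicit Types (s : {ffun 'I_N * 'I_n.+1 -> bool}) (p : 'I_N * 'I_n.+1).

(* The extra point is taken on the orbit of index N, outside the patterns, so
   its iterates never hit a_i for i < N. *)
Definition pattern_set s : set X :=
  [set x N n.+1] `|` [set x p.1 p.2 | p in [set p | s p]].

Lemma pattern_set_finite s : finite_set (pattern_set s).
Proof.
rewrite finite_setU; split; first exact: finite_set1.
exact/finite_image/finite_finset.
Qed.

Lemma pattern_set_nonempty s : pattern_set s !=set0.
Proof. by exists (x N n.+1); left. Qed.

Lemma iter_pattern_set_a s p : s p -> (iter p.2 f @` pattern_set s) (a p.1).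
Proof.
move=> sp; exists (x p.1 p.2); first by right; exists p.
by rewrite (iter_negorbit_le (xS _)) // subnn x0.
Qed.

Lemma iter_pattern_set_far d s p : orbit_gap N d -> ~~ s p ->
  forall y, (iter p.2 f @` pattern_set s) y -> d <= mdist (a p.1) y.
Proof.
move=> gap sNp _ [_ [->|[q sq <-]] <-].
  apply: (gap p.1 N) => //; [exact: ltnW | exact: full_orbit_iter |].
  by apply/eqP => /iter_x_eq_a[Np _]; move: (ltn_ord p.1); rewrite -Np ltnn.
apply: (gap p.1 q.1); [exact: ltnW | exact: ltnW | exact: full_orbit_iter |].
apply/eqP => /iter_x_eq_a[qp1 qp2].
suff qp : q = p by move: sNp; rewrite -qp sq.
by case: q qp1 qp2 {sq} => q1 q2 /= /val_inj-> /val_inj->; case: p {sNp}.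
Qed.

Lemma pattern_sets_separated d : 0 < d -> orbit_gap N d ->
  separated_family (@hyperspace R X) (@hausdorff_dist R X) (hyper_map f)
    n.+1 (d / 2)
    (fun k : 'I_#|{ffun 'I_N * 'I_n.+1 -> bool}| => pattern_set (enum_val k)).
Proof.
move=> d0 gap; apply: separated_family_enum => [s|s s' ss'].
  exact: finite_set_hyperspace (pattern_set_nonempty s) (pattern_set_finite s).
have /existsP[p sp] : [exists p, s p != s' p].
  apply: contraNT ss' => /existsPn eq_ss'; apply/eqP/ffunP => p.
  exact/eqP/negbNE/eq_ss'.
exists p.2; split=> //; rewrite !iter_hyper_map.
have gap_ge s1 s2 : s1 p -> ~~ s2 p -> d <= hausdorff_dist
    (iter p.2 f @` pattern_set s1) (iter p.2 f @` pattern_set s2).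
  move=> s1p s2p; apply: (hausdorff_dist_ge _ _ (a p.1)).
  - exact/finite_image/pattern_set_finite.
  - exact: iter_pattern_set_a.
  - exact/image_nonempty/pattern_set_nonempty.
  - exact: iter_pattern_set_far gap s2p.
have half : d / 2 < d by rewrite ltr_pdivrMr // ltr_pMr // ltr1n.
apply: lt_le_trans half _; move: sp.
case sp: (s p); case s'p: (s' p) => // _; first by apply: gap_ge; rewrite ?s'p.
by rewrite hausdorff_distC; apply: gap_ge; rewrite ?sp.
Qed.

End pattern_sets.

Lemma hyper_entropy_ge N : ((N%:R * ln 2)%:E <= hyper_entropy f)%E.
Proof.
have [d [d0 gap]] := filter_ex (filterI (nbhs_right_gt 0) (near_orbit_gap N)).
have -> : N%:R * ln 2 = ln (2 ^ N)%:R :> R by rewrite natrX lnXn // mulr_natl.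
apply: (top_entropy_ge_ln _ _ _ _ (d / 2)); rewrite ?divr_gt0 ?expn_gt0 // => n.
exists #|{ffun 'I_N * 'I_n.+1 -> bool}|.
  by rewrite card_ffun card_bool card_prod !card_ord -expnM.
by eexists; exact: pattern_sets_separated.
Qed.

End orbit_family.

Theorem theorem5p11 (R : realType) (X : metricType R) (f : X -> X)
  (a : nat -> X) (x : nat -> nat -> X) :
  compact [set: X] ->
  continuous f ->
  (forall y : X, exists z : X, f z = y) ->
  injective a ->
  (forall i, x i 0%N = a i) ->
  (forall i n, f (x i n.+1) = x i n) ->
  (\bigcup_i (alpha_set (x i) `|` omega_set f (a i))) `&`
    (\bigcup_i range (x i)) = set0 ->
  (forall i j, i <> j -> full_orbit f (x i) `&` full_orbit f (x j) = set0) ->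
  hyper_entropy f = +oo%E.
Proof.
move=> _ _ _ _ x0 xS limit_sets_disjoint orbits_disjoint.
apply: eq_infty => r; have ln2_gt0 : 0 < ln (2 : R) by rewrite ln_gt0 ?ltr1n.
apply: le_trans (hyper_entropy_ge x0 xS limit_sets_disjoint orbits_disjoint
  (Num.truncn (r / ln 2)).+1).
by rewrite lee_fin -ler_pdivrMr // ltW // truncnS_gt.
Qed.
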